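(* Assume $\chi$ is weakly generic, let $\sigma=\sigma_{a,b}$ be a Serre weight with $\mathcal{S}(\chi_1,\chi_2,\sigma)\neq\varnothing$, let $(J,x)$ be its maximal element, and let $s,t,r,\mathcal{I}_\tau$ be as in the context. Then for every $\tau\in\Sigma$: $t_\tau\in\mathcal{I}_\tau$ if and only if $t_\tau<r_\tau$.
   Context: Let $p$ be a prime, $K/\mathbf{Q}_p$ finite with residue field $k$, residue degree $f$, ramification index $e$; $I_K$ inertia. Fix $\varpi\in\overline{K}$ with $\varpi^{p^f-1}$ a uniformiser; $\omega\colon G_K\to k^\times$ sends $g$ to the reduction of $g(\varpi)/\varpi$. $\Sigma=\mathrm{Hom}_{\mathbf{F}_p}(k,\overline{\mathbf{F}}_p)$, $\varphi(x)=x^p$, $\omega_\tau=\tau\circ\omega$, $\Omega_{\tau,a}=\sum_{i=0}^{f-1}p^ia_{\tau\circ\varphi^i}$. $\chi_1,\chi_2\colon G_K\to\overline{\mathbf{F}}_p^\times$ continuous, $\chi=\chi_1\chi_2^{-1}=\psi\prod_\tau\omega_\tau^{n_\tau}$, $\psi$ unramified, $n_\tau\in[1,p]$, some $n_\tau<p$. Weakly generic: $n_\tau\in[e,p-e]$ for all $\tau$. Serre weight $\sigma_{a,b}=\bigotimes_\tau(\det^{b_\tau}\otimes\mathrm{Sym}^{a_\tau-b_\tau}k^2)\otimes_{k,\tau}\overline{\mathbf{F}}_p$, $a_\tau-b_\tau\in[0,p-1]$; $r_\tau=a_\tau-b_\tau+1$. $\mathcal{S}(\chi_1,\chi_2,\sigma)$: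 pairs $(J,x)$, $J\subseteq\Sigma$, $x_\tau\in[0,e-1]$, with $\chi_1|_{I_K}=\prod_{\tau\in J}\omega_\tau^{a_\tau+1+x_\tau}\prod_{\tau\notin J}\omega_\tau^{b_\tau+x_\tau}$ and $\chi_2|_{I_K}=\prod_{\tau\notin J}\omega_\tau^{a_\tau+e-x_\tau}\prod_{\tau\in J}\omega_\tau^{b_\tau+e-1-x_\tau}$. $s=s(J,x)$: $s_\tau=r_\tau+x_\tau$ if $\tau\in J$, $s_\tau=x_\tau$ if $\tau\notin J$. Order: $(J,x)\preceq(J',x')$ iff $\Omega_{\tau,s(J',x')-s(J,x)}\in(p^f-1)\mathbf{Z}_{\ge0}$ for all $\tau$; a non-empty $\mathcal{S}$ has a unique maximal element. For the maximal $(J,x)$: $s=s(J,x)$, $t_\tau=a_\tau-b_\tau+e-s_\tau$, and $\mathcal{I}_\tau=[0,s_\tau-1]$ if $\tau\notin J$, $\mathcal{I}_\tau=\{t_\tau\}\cup[r_\tau,s_\tau-1]$ if $\tau\in J$ (integer intervals, empty if the upper end is below the lower end). *)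

From mathcomp Require Import all_boot all_order all_algebra.
Set Implicit Arguments. Unset Strict Implicit. Unset Printing Implicit Defensive.
Import Order.TTheory GRing.Theory Num.Theory.
Local Open Scope ring_scope.

(* Sigma = Hom(k, Fpbar) is identified with 'I_f via i |-> tau_0 o phi^i.
   Then tau_j o phi^i = tau_{(j+i) mod f}. *)
Lemma ord_pos (f : nat) (j : 'I_f) : (0 < f)%N.
Proof. exact: leq_ltn_trans (leq0n j) (ltn_ord j). Qed.

Definition tau_phi (f : nat) (j : 'I_f) (i : nat) : 'I_f :=
  Ordinal (ltn_pmod (j + i) (ord_pos j)).

Definition Omega (p f : nat) (j : 'I_f) (a : 'I_f -> int) : int :=
  \sum_(i < f) (p ^ i)%:Z * a (tau_phi j i).

Definition qm1 (p f : nat) : int := (p ^ f)%:Z - 1.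

(* The inertia characters prod_tau omega_tau^{c_tau} and prod_tau omega_tau^{d_tau}
   coincide (omega_{tau o phi} = omega_tau^p, omega_tau|_{I_K} of order p^f-1). *)
Definition charI_eq (p f : nat) (c d : 'I_f -> int) : Prop :=
  forall j : 'I_f, (Omega p j c == Omega p j d %[mod qm1 p f])%Z.

Definition rr (f : nat) (a b : 'I_f -> int) (tau : 'I_f) : int := a tau - b tau + 1.

(* (J, x) in S(chi1, chi2, sigma_{a,b}), where chi_i|_{I_K} = prod omega_tau^{k_i tau} *)
Definition inS (p f e : nat) (a b k1 k2 : 'I_f -> int)
    (J : {set 'I_f}) (x : 'I_f -> nat) : Prop :=
  [/\ forall tau, (x tau < e)%N,
      charI_eq p (fun tau => if tau \in J then a tau + 1 + (x tau)%:Z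
                             else b tau + (x tau)%:Z) k1
    & charI_eq p (fun tau => if tau \in J then b tau + e%:Z - 1 - (x tau)%:Z
                             else a tau + e%:Z - (x tau)%:Z) k2].

Definition sJx (f : nat) (a b : 'I_f -> int) (J : {set 'I_f}) (x : 'I_f -> nat)
    (tau : 'I_f) : int :=
  if tau \in J then rr a b tau + (x tau)%:Z else (x tau)%:Z.

Definition preceqS (p f : nat) (a b : 'I_f -> int)
    (J : {set 'I_f}) (x : 'I_f -> nat) (J' : {set 'I_f}) (x' : 'I_f -> nat) : Prop :=
  forall tau : 'I_f,
    let d := Omega p tau (fun t => sJx a b J' x' t - sJx a b J x t) in
    0 <= d /\ (qm1 p f %| d)%Z.

Definition tt (f e : nat) (a b : 'I_f -> int) (J : {set 'I_f}) (x : 'I_f -> nat)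
    (tau : 'I_f) : int :=
  a tau - b tau + e%:Z - sJx a b J x tau.

Definition inI (f e : nat) (a b : 'I_f -> int) (J : {set 'I_f}) (x : 'I_f -> nat)
    (tau : 'I_f) (y : int) : bool :=
  let s := sJx a b J x tau in
  if tau \in J then (y == tt e a b J x tau) || ((rr a b tau <= y) && (y <= s - 1))
  else (0 <= y) && (y <= s - 1).

From mathcomp Require Import all_boot all_order all_algebra.
From mathcomp Require Import zify ring.
Set Implicit Arguments. Unset Strict Implicit. Unset Printing Implicit Defensive.
Import Order.TTheory GRing.Theory Num.Theory.
Local Open Scope ring_scope.

(* Write s = s(J,x) and r_t = a_t - b_t + 1.  The congruences defining S,
   together with chi = chi1 chi2^-1, say that the defect
   d = 2s - (r - 1) - e - n satisfies Omega_t(d) = m_t (p^f - 1) for every t,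
   and the shift identity Omega_t(d) + (p^f - 1) d_t = p Omega_{t phi}(d)
   turns this into d_t = p m_{t phi} - m_t.  Weak genericity confines d to
   [1 - 2p, p - 1], hence m to [-2, 1].  If r_t <= s_t < e, then
   d_t lies in [2 - p, -2], which forces m_t = -2 and so d_{t phi^-1} <= 2 - 2p;
   this only happens when t phi^-1 is outside J with x = 0 there and
   r_{t phi^-1} >= p - 1.  Adding p to s at t phi^-1 and removing 1 at t is a
   base-p carry: it gives another element of S whose Omega_t exceeds that of
   (J,x) by p^f - 1, against maximality.  Hence r_t <= s_t forces s_t >= e, and
   the equivalence t_tau in I_tau <-> t_tau < r_tau is then arithmetic. *)

Section FrobeniusTwist.
Variable f : nat.
Implicit Types j : 'I_f.

Lemma tau_phiA j k i : tau_phi (tau_phi j k) i = tau_phi j (k + i).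
Proof. by apply: val_inj; rewrite /= modnDml addnA. Qed.

Lemma tau_phi0 j : tau_phi j 0 = j.
Proof. by apply: val_inj; rewrite /= addn0 modn_small. Qed.

Lemma tau_phif j : tau_phi j f = j.
Proof. by apply: val_inj; rewrite /= modnDr modn_small. Qed.

Lemma eq_tau_phi j i k : (i < f)%N -> (k < f)%N ->
  (tau_phi j i == tau_phi j k) = (i == k).
Proof.
move=> lt_if lt_kf; apply/eqP/eqP => [/(congr1 val) /= /eqP|-> //].
by rewrite eqn_modDl !modn_small // => /eqP.
Qed.

Lemma tau_phi_to j (t : 'I_f) : tau_phi j (t + f - j) = t.
Proof.
apply: val_inj => /=; have lt_t := ltn_ord t; have lt_j := ltn_ord j.
have -> : (j + (t + f - j) = t + f)%N by lia.
by rewrite modnDr modn_small.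
Qed.

Definition tau_prev j := tau_phi j f.-1.

Lemma tau_phi_prev j : tau_phi (tau_prev j) 1 = j.
Proof. by rewrite tau_phiA addn1 prednK ?tau_phif // (ord_pos j). Qed.

End FrobeniusTwist.

Section Omega.
Variables p f : nat.
Implicit Types (j t : 'I_f) (c d : 'I_f -> int).
Local Notation q := (qm1 p f).

Lemma eq_Omega j c d : c =1 d -> Omega p j c = Omega p j d.
Proof. by move=> eq_cd; apply: eq_bigr => i _; rewrite eq_cd. Qed.

Lemma OmegaD j c d : Omega p j (fun t => c t + d t) = Omega p j c + Omega p j d.
Proof. by rewrite /Omega -big_split; apply: eq_bigr => i _; rewrite mulrDr. Qed.

Lemma OmegaN j c : Omega p j (fun t => - c t) = - Omega p j c.
Proof. by rewrite /Omega -sumrN; apply: eq_bigr => i _; rewrite mulrN. Qed.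

Lemma OmegaB j c d : Omega p j (fun t => c t - d t) = Omega p j c - Omega p j d.
Proof. by rewrite OmegaD OmegaN. Qed.

Lemma ler_Omega j c d : (forall t, c t <= d t) -> Omega p j c <= Omega p j d.
Proof. by move=> le_cd; apply: ler_sum => i _; apply: ler_wpM2l. Qed.

Lemma Omega_cst j v : (0 < p)%N -> (p%:Z - 1) * Omega p j (fun=> v) = v * q.
Proof.
move=> p_gt0; rewrite /Omega -big_distrl /= mulrA mulrC; congr (_ * _).
have p_f_gt0 : (0 < p ^ f)%N by rewrite expn_gt0 p_gt0.
rewrite /qm1 -(big_morph Posz PoszD (erefl 0%:Z)) !subzn // -PoszM.
by rewrite !subn1 -predn_exp.
Qed.

Lemma Omega_delta j k v : (k < f)%N ->
  Omega p j (fun t => if t == tau_phi j k then v else 0) = (p ^ k)%:Z * v.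
Proof.
move=> lt_kf; rewrite /Omega (bigD1 (Ordinal lt_kf)) //= eqxx big1 ?addr0 //.
by move=> i ne_ik; rewrite eq_tau_phi // (negbTE (ne_ik : (i : nat) != k)) mulr0.
Qed.

Lemma Omega_shift j c : Omega p j c + q * c j = p%:Z * Omega p (tau_phi j 1) c.
Proof.
rewrite /Omega big_distrr /=.
under [RHS]eq_bigr => i _ do rewrite tau_phiA add1n mulrA -PoszM -expnS.
pose F i := (p ^ i)%:Z * c (tau_phi j i).
have shiftF : F 0%N + \sum_(0 <= i < f) F i.+1 = \sum_(0 <= i < f) F i + F f.
  by rewrite -big_nat_recl // -big_nat_recr.
rewrite -(big_mkord xpredT F) -(big_mkord xpredT (fun i => F i.+1)).
apply: (addrI (F 0%N)); rewrite shiftF /F tau_phif tau_phi0 expn0 /qm1; ring.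
Qed.

Lemma Omega_carry j : (0 < f)%N ->
  Omega p j (fun t => (if t == tau_prev j then p%:Z else 0) - (if t == j then 1 else 0)) = q.
Proof.
move=> f_gt0; rewrite OmegaB -[in X in _ - Omega p j X](tau_phi0 j).
by rewrite !Omega_delta ?prednK // -PoszM -expnSr prednK // mulr1.
Qed.

Lemma qm1_gt0 : (1 < p)%N -> (0 < f)%N -> 0 < q.
Proof.
move=> p_gt1 f_gt0; suff : (1 < p ^ f)%N by rewrite /qm1; lia.
by rewrite -(prednK f_gt0) expnS (leq_trans p_gt1) // leq_pmulr // expn_gt0 ltnW.
Qed.

Lemma dvd_Omega_prev j c :
  (q %| Omega p (tau_phi j 1) c)%Z -> (q %| Omega p j c)%Z.
Proof.
move=> dvd_next; have -> : Omega p j c = p%:Z * Omega p (tau_phi j 1) c - q * c j.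
  by rewrite -Omega_shift addrK.
by apply: rpredB; [exact: dvdz_mull | exact: dvdz_mulr (dvdzz _)].
Qed.

Lemma dvd_Omega_all t c : (q %| Omega p t c)%Z -> forall j, (q %| Omega p j c)%Z.
Proof.
move=> dvd_t j; rewrite -(tau_phi_to j t) in dvd_t.
elim: (t + f - j)%N dvd_t => [|i IHi]; first by rewrite tau_phi0.
by rewrite -addn1 -tau_phiA => /dvd_Omega_prev /IHi.
Qed.

Lemma Omega_quot_rec c (m : 'I_f -> int) j : q != 0 ->
  (forall t, Omega p t c = m t * q) -> c j = p%:Z * m (tau_phi j 1) - m j.
Proof.
move=> q_neq0 Omega_c; apply: (mulIf q_neq0); apply: (addrI (m j * q)).
by rewrite [c j * q]mulrC {1}(esym (Omega_c j)) Omega_shift Omega_c; ring.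
Qed.

Lemma Omega_quot_bounds c (lo hi m : int) j : (1 < p)%N -> (0 < f)%N ->
  (forall t, lo <= c t <= hi) -> Omega p j c = m * q ->
  lo <= (p%:Z - 1) * m <= hi.
Proof.
move=> p_gt1 f_gt0 c_bnd Omega_c; have q_gt0 := qm1_gt0 p_gt1 f_gt0.
have p1_ge0 : 0 <= p%:Z - 1 by lia.
apply/andP; split; rewrite -(ler_pM2r q_gt0) -?mulrA -Omega_c -(Omega_cst j) ?(ltnW p_gt1) //;
  by apply: ler_wpM2l => //; apply: ler_Omega => t; case/andP: (c_bnd t).
Qed.

Lemma charI_eqP c d :
  charI_eq p c d <-> forall j, (q %| Omega p j (fun t => c t - d t))%Z.
Proof. by split=> h j; have := h j; rewrite OmegaB eqz_mod_dvd. Qed.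

End Omega.

Section SerreWeightSet.
Variables (p f e : nat) (a b k1 k2 : 'I_f -> int).
Implicit Types (J : {set 'I_f}) (x : 'I_f -> nat).
Local Notation q := (qm1 p f).
Local Notation S := (inS p e a b k1 k2).
Local Notation s := (sJx a b).
Local Notation r := (rr a b).

Lemma inSE J x : S J x <->
  [/\ forall t, (x t < e)%N,
      charI_eq p (fun t => b t + s J x t) k1
    & charI_eq p (fun t => a t + e%:Z - s J x t) k2].
Proof.
have E1 : (fun t => if t \in J then a t + 1 + (x t)%:Z else b t + (x t)%:Z)
    =1 (fun t => b t + s J x t).
  by move=> t; rewrite /sJx /rr; case: ifP => _; ring.
have E2 : (fun t => if t \in J then b t + e%:Z - 1 - (x t)%:Z else a t + e%:Z - (x t)%:Z)
    =1 (fun t => a t + e%:Z - s J x t).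
  by move=> t; rewrite /sJx /rr; case: ifP => _; ring.
by split=> -[lt_xe S1 S2]; split=> // j; move: (S1 j) (S2 j);
  rewrite ?(eq_Omega _ _ E1) ?(eq_Omega _ _ E2).
Qed.

Lemma inS_shift J x J' x' : S J x -> (forall t, (x' t < e)%N) ->
  (forall j, (q %| Omega p j (fun t => s J' x' t - s J x t))%Z) -> S J' x'.
Proof.
rewrite !inSE => -[_ /charI_eqP S1 /charI_eqP S2] lt_x'e dvd_ds.
split=> //; apply/charI_eqP => j.
  rewrite (@eq_Omega _ _ _ _ (fun t => (b t + s J x t - k1 t) + (s J' x' t - s J x t))).
    by rewrite OmegaD rpredD.
  by move=> t; ring.
rewrite (@eq_Omega _ _ _ _ (fun t => (a t + e%:Z - s J x t - k2 t) - (s J' x' t - s J x t))).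
  by rewrite OmegaB rpredB.
by move=> t; ring.
Qed.

Lemma carry_not_maximal J x σ τ : (1 < p)%N -> (0 < f)%N -> S J x ->
  σ = tau_prev τ -> σ != τ -> σ \notin J -> x σ = 0%N ->
  p%:Z - 1 <= r σ <= p%:Z -> 0 < s J x τ < e%:Z ->
  exists J' x', S J' x' /\ ~ preceqS p a b J' x' J x.
Proof.
move=> p_gt1 f_gt0 SJx σE ne_στ σ_notJ xσ0 rσ_bnd sτ_bnd.
pose δ t := (if t == σ then p%:Z else 0) - (if t == τ then 1 else 0).
pose x' t := if t == σ then `|p%:Z - r σ|%N
             else if t == τ then `|s J x τ - 1|%N else x t.
have s'E t : s (σ |: (J :\ τ)) x' t - s J x t = δ t.
  rewrite {1}/sJx /x' /δ !inE; case: (eqVneq t σ) => [->|_] /=.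
    by rewrite (negbTE ne_στ) /sJx (negbTE σ_notJ) xσ0; lia.
  by case: (eqVneq t τ) => [->|_] /=; [lia | rewrite /sJx subrr].
have [lt_xe _ _] := (inSE _ _).1 SJx.
exists (σ |: (J :\ τ)), x'; split.
  apply: inS_shift SJx _ _ => [t|].
    by rewrite /x'; case: eqP => _; [|case: eqP => _; last exact: lt_xe]; lia.
  apply: (dvd_Omega_all (t := τ)).
  by rewrite (eq_Omega _ _ s'E) /δ σE Omega_carry // dvdzz.
move=> /(_ τ) [+ _]; rewrite (@eq_Omega _ _ _ _ (fun t => - δ t)).
  by rewrite OmegaN /δ σE Omega_carry // oppr_ge0 leNgt qm1_gt0.
by move=> t; rewrite -s'E opprB.
Qed.

End SerreWeightSet.

Section MaximalElement.
Variables (p f e : nat) (k1 k2 n a b : 'I_f -> int).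
Hypotheses (p_gt1 : (1 < p)%N) (f_gt0 : (0 < f)%N).
Hypothesis chi_n : charI_eq p (fun t => k1 t - k2 t) n.
Hypothesis n_generic : forall t, e%:Z <= n t <= p%:Z - e%:Z.
Hypothesis ab_weight : forall t, 0 <= a t - b t <= p%:Z - 1.
Variables (J : {set 'I_f}) (x : 'I_f -> nat).
Hypothesis SJx : inS p e a b k1 k2 J x.
Hypothesis maxJx : forall J' x', inS p e a b k1 k2 J' x' -> preceqS p a b J' x' J x.

Local Notation q := (qm1 p f).
Local Notation s := (sJx a b J x).
Local Notation r := (rr a b).

Definition defect t := 2 * s t - (r t - 1) - e%:Z - n t.

Lemma dvd_Omega_defect j : (q %| Omega p j defect)%Z.
Proof.
have /inSE [_ /charI_eqP S1 /charI_eqP S2] := SJx; move/charI_eqP: chi_n => chi.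
rewrite (@eq_Omega _ _ _ _ (fun t => (b t + s t - k1 t) - (a t + e%:Z - s t - k2 t)
                                      + (k1 t - k2 t - n t))).
  by rewrite OmegaD OmegaB rpredD ?rpredB.
by move=> t; rewrite /defect /rr; ring.
Qed.

Lemma defect_bounds t : 1 - 2 * p%:Z <= defect t <= p%:Z - 1.
Proof.
have /inSE [lt_xe _ _] := SJx; have := lt_xe t; have := n_generic t; have := ab_weight t.
by rewrite /defect /sJx /rr; case: (t \in J); lia.
Qed.

Let m t := (Omega p t defect %/ q)%Z.

Lemma defect_rec t : defect t = p%:Z * m (tau_phi t 1) - m t.
Proof.
apply: Omega_quot_rec => [|j]; first by rewrite gt_eqF ?qm1_gt0.
by rewrite divzK ?dvd_Omega_defect.
Qed.

Lemma m_bounds t : (2 < p)%N -> -2 <= m t <= 1.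
Proof.
move=> p_gt2.
have := Omega_quot_bounds p_gt1 f_gt0 defect_bounds (esym (divzK (dvd_Omega_defect t))).
rewrite -/(m t); nia.
Qed.

Lemma m_eqN2 t : (2 < p)%N -> 2 - p%:Z <= defect t <= -2 -> m t = -2.
Proof.
move=> p_gt2; have := m_bounds (tau_phi t 1) p_gt2; have := m_bounds t p_gt2.
rewrite defect_rec; move: (m t) (m (tau_phi t 1)) => v u v_bnd u_bnd.
have : u = -2 \/ u = -1 \/ u = 0 \/ u = 1 by lia.
by case=> [|[|[|]]] ->; lia.
Qed.

Lemma defect_prev t : (2 < p)%N -> 2 - p%:Z <= defect t <= -2 ->
  defect (tau_prev t) <= 2 - 2 * p%:Z.
Proof.
move=> p_gt2 d_bnd; have := m_bounds (tau_prev t) p_gt2.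
by rewrite defect_rec tau_phi_prev (m_eqN2 p_gt2 d_bnd); lia.
Qed.

Lemma defect_le_notin t : defect t <= 2 - 2 * p%:Z ->
  [/\ t \notin J, x t = 0%N & p%:Z - 1 <= r t].
Proof.
have := n_generic t; have := ab_weight t; rewrite /defect /sJx /rr.
by case: (boolP (t \in J)) => _ n_bnd r_bnd d_le; [lia | split=> //; lia].
Qed.

Lemma sJx_ge_e t : r t <= s t -> e%:Z <= s t.
Proof.
move=> le_rs; rewrite leNgt; apply/negP => lt_se.
have := n_generic t; have := ab_weight t; rewrite /rr in le_rs * => n_bnd r_bnd.
have p_gt2 : (2 < p)%N by lia.
have d_bnd : 2 - p%:Z <= defect t <= -2 by rewrite /defect /rr; lia.
have d_prev := defect_prev p_gt2 d_bnd.
have [prev_notJ x_prev r_prev] := defect_le_notin d_prev.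
have ne_prev : tau_prev t != t by apply: contraTneq d_prev => ->; lia.
have r_prev_bnd : p%:Z - 1 <= r (tau_prev t) <= p%:Z.
  by have := ab_weight (tau_prev t); rewrite /rr in r_prev *; lia.
have s_bnd : 0 < s t < e%:Z by lia.
have [J' [x' [SJ'x' not_le]]] :=
  carry_not_maximal p_gt1 f_gt0 SJx erefl ne_prev prev_notJ x_prev r_prev_bnd s_bnd.
exact: not_le (maxJx SJ'x').
Qed.

End MaximalElement.

Theorem proposition5p10 (p f e : nat) (hp : prime p) (hf : (0 < f)%N) (he : (0 < e)%N)
    (k1 k2 n a b : 'I_f -> int)
    (* chi|_{I_K} = (chi1 chi2^{-1})|_{I_K} = prod_tau omega_tau^{n_tau} *)
    (hchi : charI_eq p (fun tau => k1 tau - k2 tau) n)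
    (hn : forall tau, 1 <= n tau <= p%:Z)
    (hnp : exists tau, n tau < p%:Z)
    (* weakly generic *)
    (hgen : forall tau, e%:Z <= n tau <= p%:Z - e%:Z)
    (* Serre weight sigma_{a,b} *)
    (hab : forall tau, 0 <= a tau - b tau <= p%:Z - 1)
    (J : {set 'I_f}) (x : 'I_f -> nat)
    (hS : inS p e a b k1 k2 J x)
    (hmax : forall (J' : {set 'I_f}) (x' : 'I_f -> nat),
        inS p e a b k1 k2 J' x' -> preceqS p a b J' x' J x) :
  forall tau : 'I_f,
    inI e a b J x tau (tt e a b J x tau) = (tt e a b J x tau < rr a b tau).
Proof.
(* [hn], [hnp] and [he] are unused: weak genericity bounds [n], and [hS] forces [e > 0]. *)
move=> tau; have ge_e := sJx_ge_e (prime_gt1 hp) hf hchi hgen hab hS hmax (t := tau).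
have /inSE [lt_xe _ _] := hS; have := lt_xe tau.
rewrite /inI /tt; move: ge_e; rewrite /sJx /rr.
by case: (tau \in J) => /= ge_e lt_x; rewrite ?eqxx /=; lia.
Qed.
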